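(* In the setting described in the context, let $0<h<h_\circ$ and $\mathcal D_{v,\circ}^h=\{x\in\mathbb R^d:1/2\le\Phi_v^h(x)\le2\}$. Then $|\nabla\Phi_v^h(x)|\ge 1/(20d)$ for all $x\in\mathcal D_{v,\circ}^h$.
   Context: $B_r$ is the open ball of radius $r$ centered at $0$ in $\mathbb R^d$, $2\le d\le4$. Let $\phi:\mathbb R^d\to\mathbb R$ coincide on $[-1,1]^d$ with an analytic convex function of finite type defined on $[-2,2]^d$ and vanish outside $[-1,1]^d$; finite type means there are an integer $k\ge2$ and $m>0$ with $\sum_{j=2}^k\frac1{j!}|(u\cdot\nabla)^j\phi(x)|\ge m$ for all $x\in[-1,1]^d$ and unit vectors $u$. For $v\in\mathbb R^d$ with $-v\in\nabla\phi(B_{1/4})$, let $\omega_v\in B_{1/4}$ be the unique point with $\nabla\phi(\omega_v)=-v$ and $\Phi_v(x)=\phi(x+\omega_v)+v\cdot x-\phi(\omega_v)$. There is $c_\phi>0$ with $(c_\phi|x|)^k\le\Phi_v(x)$ on $B_{1/2}$ for all such $v$; fix $0<h_\circ\le(c_\phi/4)^k$. For $0<h<h_\circ$ let $\mathcal B_v^h=\{x\in B_{1/2}:\Phi_v(x)<h/2\}$, let $T_v^h$ be an invertible affine map of $\mathbb R^d$ with $B_1\subset(T_v^h)^{-1}\mathcal B_v^h\subset B_d$, and set $\Phi_v^h(x)=h^{-1}\Phi_v(T_v^hx)$. Standing assumption: $h_\circ$ is small enough that every $\Phi_v^h$ is defined, convex and of finite type on a ball $B_{R_\circ}$ with $R_\circ\ge100d$.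 *)

From HB Require Import structures.
From mathcomp Require Import all_boot all_order all_algebra.
From mathcomp Require Import all_classical all_reals all_analysis.
Set Implicit Arguments. Unset Strict Implicit. Unset Printing Implicit Defensive.
Import Order.TTheory GRing.Theory Num.Theory.
Import numFieldNormedType.Exports.
Local Open Scope classical_set_scope.
Local Open Scope ring_scope.

Section Defs.
Variables (R : realType) (d : nat).
Notation V := 'rV[R]_d.

Definition dotv (x y : V) : R := \sum_(i < d) x 0 i * y 0 i.
Definition enorm (x : V) : R := Num.sqrt (dotv x x).

Definition eball (r : R) : set V := [set x | enorm x < r].

Definition cube (a : R) : set V := [set x | forall i, - a <= x 0 i <= a].

Definition dder (u : V) (f : V -> R) : V -> R := fun x => 'D_u f x.
Definition dder_iter (j : nat) (u : V) (f : V -> R) : V -> R := iter j (dder u) f.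

Definition grad (f : V -> R) (x : V) : V :=
  \row_(i < d) 'D_(delta_mx 0 i : V) f x.

Definition convex_on (S : set V) (f : V -> R) : Prop :=
  forall x y (t : R), S x -> S y -> 0 <= t <= 1 ->
    f (t *: x + (1 - t) *: y) <= t * f x + (1 - t) * f y.

Definition finite_type_km (S : set V) (f : V -> R) (k : nat) (m : R) : Prop :=
  (2 <= k)%N /\ 0 < m /\
  forall x u, S x -> enorm u = 1 ->
    m <= \sum_(2 <= j < k.+1) (j`!%:R)^-1 * `|dder_iter j u f x|.

Definition finite_type_on (S : set V) (f : V -> R) : Prop :=
  exists k m, finite_type_km S f k m.

(* real analyticity on S: around each a in S, f is given by an absolutely
   convergent multivariate power series  f(a+y) = sum_alpha c_alpha y^alpha
   (for y small with a+y in S); the series is summed over growing boxes of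
   multi-indices. *)
Definition monom (al : 'I_d -> nat) (y : V) : R := \prod_(i < d) y 0 i ^+ al i.
Definition box_psum (c : ('I_d -> nat) -> R) (y : V) (N : nat) : R :=
  \sum_(al : {ffun 'I_d -> 'I_N.+1}) c (fun i => nat_of_ord (al i)) * monom (fun i => nat_of_ord (al i)) y.
Definition box_abssum (c : ('I_d -> nat) -> R) (y : V) (N : nat) : R :=
  \sum_(al : {ffun 'I_d -> 'I_N.+1}) `|c (fun i => nat_of_ord (al i)) * monom (fun i => nat_of_ord (al i)) y|.

Definition analytic_on (S : set V) (f : V -> R) : Prop :=
  forall a, S a -> exists2 r : R, 0 < r &
    exists c : ('I_d -> nat) -> R,
      forall y, enorm y < r -> S (a + y) ->
        (exists M : R, forall N, box_abssum c y N <= M) /\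
        (box_psum c y @ \oo --> f (a + y)).

Definition Phi (psi : V -> R) (v om : V) (x : V) : R :=
  psi (x + om) + dotv v x - psi om.

Definition sublev (psi : V -> R) (v om : V) (h : R) : set V :=
  [set x | eball (2^-1) x /\ Phi psi v om x < h / 2].

Definition affine (A : 'M[R]_d) (b : V) (x : V) : V := x *m A + b.

Definition Phih (psi : V -> R) (v om : V) (h : R) (A : 'M[R]_d) (b : V) (x : V) : R :=
  h^-1 * Phi psi v om (affine A b x).

End Defs.

(* Write f for Phi_v^h, T for T_v^h and x0 := T^-1 0, so that f is convex with
   f x0 = 0 and convexity along the segment from x0 gives
   f (x0 + t (x - x0)) <= t f x.  Let f x <= 2.  If |T x| >= 5/2, the point with
   t = 1/(4 |T x|) is mapped by T to t T x, of norm 1/4, and the growth bound gives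
   (c_phi/4)^k <= Phi_v (t T x) <= h t f x <= h/5, contradicting h < (c_phi/4)^k.
   So |T x| < 5/2, and t = 1/5 puts x0 + (x - x0)/5 in the normalised sublevel
   set, which lies in B_d: hence |x - x0| < 10 d.  The supporting hyperplane
   inequality at x then gives 1/2 <= f x <= grad f x . (x - x0) <= 10 d |grad f x|.
   The gradient is meaningful because phi is analytic: its power series at T x + om
   has a quadratic first-order Taylor remainder, so f has directional derivatives
   that are linear in the direction. *)

From HB Require Import structures.
From mathcomp Require Import all_boot all_order all_algebra.
From mathcomp Require Import all_classical all_reals all_analysis.
From mathcomp Require Import ring lra zify.
Import Order.TTheory GRing.Theory Num.Theory.
Import numFieldNormedType.Exports.
Local Open Scope classical_set_scope.
Local Open Scope ring_scope.
Set Implicit Arguments. Unset Strict Implicit. Unset Printing Implicit Defensive.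

Section Euclidean.
Variables (R : realType) (d : nat).
Implicit Types (x y z : 'rV[R]_d) (a b t : R).

Lemma dotvC x y : dotv x y = dotv y x.
Proof. by apply: eq_bigr => i _; rewrite mulrC. Qed.

Lemma dotvDr x y z : dotv x (y + z) = dotv x y + dotv x z.
Proof. by rewrite /dotv -big_split; apply: eq_bigr => i _; rewrite mxE mulrDr. Qed.

Lemma dotvZr x y t : dotv x (t *: y) = t * dotv x y.
Proof. by rewrite /dotv mulr_sumr; apply: eq_bigr => i _; rewrite mxE mulrCA. Qed.

Lemma dotvDl x y z : dotv (x + y) z = dotv x z + dotv y z.
Proof. by rewrite dotvC dotvDr !(dotvC z). Qed.

Lemma dotvZl x y t : dotv (t *: x) y = t * dotv x y.
Proof. by rewrite dotvC dotvZr dotvC. Qed.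

Lemma dotv0r x : dotv x 0 = 0.
Proof. by rewrite -(scale0r 0) dotvZr mul0r. Qed.

Lemma dotvE x y : dotv x y = (x *m y^T) 0 0.
Proof. by rewrite mxE; apply: eq_bigr => i _; rewrite mxE. Qed.

Lemma dotv_mulmxr x y (A : 'M[R]_d) : dotv x (y *m A) = dotv (x *m A^T) y.
Proof. by rewrite !dotvE trmx_mul mulmxA. Qed.

Lemma dotv_delta x i : dotv x (delta_mx 0 i) = x 0 i.
Proof.
rewrite /dotv (bigD1 i) //= mxE !eqxx mulr1 big1 ?addr0 // => j /negbTE ji.
by rewrite mxE ji andbF mulr0.
Qed.

Lemma dotv_lincomb x y a b :
  dotv (a *: x + b *: y) (a *: x + b *: y)
  = a ^+ 2 * dotv x x + 2 * a * b * dotv x y + b ^+ 2 * dotv y y.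
Proof.
rewrite /dotv !mulr_sumr -!big_split /=; apply: eq_bigr => i _; rewrite !mxE.
ring.
Qed.

Lemma dotvv_ge0 x : 0 <= dotv x x.
Proof. by apply: sumr_ge0 => i _; rewrite -expr2 sqr_ge0. Qed.

Lemma dotvv_eq0 x : (dotv x x == 0) = (x == 0).
Proof.
apply/idP/eqP => [|->]; last by rewrite dotv0r.
rewrite psumr_eq0 => [/allP x0|i _]; last by rewrite -expr2 sqr_ge0.
apply/rowP => i; have /= := x0 i (mem_index_enum i).
by rewrite mxE -expr2 sqrf_eq0 => /eqP.
Qed.

Lemma dotv_sqr_le x y : dotv x y ^+ 2 <= dotv x x * dotv y y.
Proof.
have [->|y0] := eqVneq y 0; first by rewrite !dotv0r expr0n mulr0.
have yy_gt0 : 0 < dotv y y by rewrite lt0r dotvv_eq0 y0 dotvv_ge0.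
have := dotvv_ge0 (dotv y y *: x + (- dotv x y) *: y).
rewrite dotv_lincomb; nra.
Qed.

Lemma enorm_ge0 x : 0 <= enorm x.
Proof. exact: sqrtr_ge0. Qed.

Lemma enorm0 : enorm (0 : 'rV[R]_d) = 0.
Proof. by rewrite /enorm dotv0r sqrtr0. Qed.

Lemma enormZ t x : enorm (t *: x) = `|t| * enorm x.
Proof.
by rewrite /enorm dotvZr dotvC dotvZr mulrA -expr2 sqrtrM ?sqr_ge0 // sqrtr_sqr.
Qed.

Lemma enormN x : enorm (- x) = enorm x.
Proof. by rewrite -scaleN1r enormZ normrN normr1 mul1r. Qed.

Lemma enorm_distC x y : enorm (x - y) = enorm (y - x).
Proof. by rewrite -enormN opprB. Qed.

Lemma normr_dotv_le x y : `|dotv x y| <= enorm x * enorm y.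
Proof.
rewrite -sqrtr_sqr -sqrtrM ?dotvv_ge0 // ler_sqrt ?dotv_sqr_le //.
by rewrite mulr_ge0 ?dotvv_ge0.
Qed.

Lemma enorm_sqr x : enorm x ^+ 2 = dotv x x.
Proof. by rewrite sqr_sqrtr ?dotvv_ge0. Qed.

Lemma enormD x y : enorm (x + y) <= enorm x + enorm y.
Proof.
have le_sqr : dotv (x + y) (x + y) <= (enorm x + enorm y) ^+ 2.
  have := dotv_lincomb x y 1 1; rewrite !scale1r => ->.
  have := normr_dotv_le x y; rewrite sqrrD !enorm_sqr ler_norml => /andP[_]; lra.
rewrite -[_ + enorm y]ger0_norm ?addr_ge0 ?enorm_ge0 // -sqrtr_sqr.
exact: ler_wsqrtr.
Qed.

Lemma coord_le_enorm x i : `|x 0 i| <= enorm x.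
Proof.
rewrite -sqrtr_sqr ler_sqrt ?dotvv_ge0 // /dotv (bigD1 i) //= -expr2 lerDl.
by apply: sumr_ge0 => j _; rewrite -expr2 sqr_ge0.
Qed.

End Euclidean.

Lemma is_derive_quadratic (R : realType) (V : normedModType R) (f : V -> R)
    (x u : V) (D tau C : R) : 0 < tau ->
  (forall t, 0 < `|t| < tau -> `|f (t *: u + x) - f x - t * D| <= C * t ^+ 2) ->
  is_derive x u f D.
Proof.
move=> tau_gt0 rem.
have quot_cvg : (fun t => t^-1 *: ((f \o shift x) (t *: u) - f x)) @ 0^' --> D.
  apply/cvgrPdist_le => e e_gt0.
  have C1_gt0 : 0 < `|C| + 1 by rewrite ltr_wpDl.
  exists (Num.min tau (e / (`|C| + 1))); first by rewrite /= lt_min tau_gt0 divr_gt0.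
  move=> t /=; rewrite sub0r normrN lt_min => /andP[t_tau t_e] t0.
  have t_gt0 : 0 < `|t| by rewrite normr_gt0.
  rewrite ltr_pdivlMr // in t_e.
  have -> : D - t^-1 *: (f (t *: u + x) - f x) = - (f (t *: u + x) - f x - t * D) / t.
    by rewrite /GRing.scale /=; field.
  rewrite normrM normrN normfV ler_pdivrMr //.
  apply: le_trans (rem t _) _; first by rewrite t_gt0.
  rewrite -real_normK ?num_real // expr2 mulrA ler_pM2r //.
  have := ler_norm C; nra.
by split; [exact: cvgP quot_cvg | exact: cvg_lim].
Qed.

Lemma derive_le_of_convex (R : realType) (d : nat) (S : set 'rV[R]_d)
    (f : 'rV[R]_d -> R) (x y : 'rV[R]_d) :
  convex_on S f -> S x -> S y -> derivable f x (y - x) ->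
  'D_(y - x) f x <= f y - f x.
Proof.
move=> cvx Sx Sy /cvg_dnbhs_at_right quot_cvg.
apply: (cvgr_to_le quot_cvg); near=> t.
have t_gt0 : 0 < t by near: t; exact: nbhs_right_gt.
have t_lt1 : t < 1 by near: t; exact: nbhs_right_lt.
have t01 : 0 <= t <= 1 by rewrite !ltW.
have := cvx y x t Sy Sx t01.
have -> : t *: y + (1 - t) *: x = t *: (y - x) + x.
  by apply/rowP => i; rewrite !mxE; ring.
rewrite /= /GRing.scale /= ler_pdivrMl // => cvx_t.
lra.
Unshelve. all: by end_near.
Qed.

Lemma convex_sub_le (R : realType) (d : nat) (S : set 'rV[R]_d)
    (f : 'rV[R]_d -> R) (x y G : 'rV[R]_d) :
  convex_on S f -> S x -> S y -> is_derive x (y - x) f (dotv G (y - x)) ->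
  f x - f y <= enorm G * enorm (x - y).
Proof.
move=> cvx Sx Sy [f_ex f_val]; have := derive_le_of_convex cvx Sx Sy f_ex.
rewrite f_val -lerN2 opprB => /le_trans; apply.
have := normr_dotv_le G (y - x); rewrite ler_norml enorm_distC => /andP[+ _].
by rewrite lerNl.
Qed.

Section Taylor.
Variables (R : realType) (d : nat).
Implicit Types (c : ('I_d -> nat) -> R) (y : 'rV[R]_d) (rho s : R).

Definition mindex N (al : {ffun 'I_d -> 'I_N.+1}) : 'I_d -> nat := fun i => al i.
Definition mdeg N (al : {ffun 'I_d -> 'I_N.+1}) : nat := (\sum_i mindex al i)%N.
Definition unit_mindex (j : 'I_d) : 'I_d -> nat := fun i => (i == j) : nat.
Definition lin_coef c : 'rV[R]_d := \row_j c (unit_mindex j).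

(* Boxes of side [N.+2] contain the multi-indices of degree 0 and 1. *)
Definition box0 N : {ffun 'I_d -> 'I_N.+2} := [ffun _ => ord0].
Definition box_unit N (j : 'I_d) : {ffun 'I_d -> 'I_N.+2} := [ffun i => inord (i == j)].

Lemma mindex_box0 N : mindex (box0 N) = fun _ => 0%N.
Proof. by apply: funext => i; rewrite /mindex ffunE. Qed.

Lemma mindex_box_unit N j : mindex (box_unit N j) = unit_mindex j.
Proof. by apply: funext => i; rewrite /mindex ffunE inordK //; case: (i == j). Qed.

Lemma box_unit_inj N : injective (@box_unit N).
Proof.
move=> i j /(congr1 (fun al => mindex al i)); rewrite !mindex_box_unit /unit_mindex.
by rewrite eqxx; case: eqP.
Qed.

Lemma mdeg_eq0 N (al : {ffun 'I_d -> 'I_N.+2}) : (mdeg al == 0)%N = (al == box0 N).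
Proof.
rewrite /mdeg sum_nat_eq0; apply/forallP/eqP => [al0|-> i]; last by rewrite mindex_box0.
by apply/ffunP => i; apply: val_inj; rewrite ffunE; apply/eqP/al0.
Qed.

Lemma mdeg_eq1 N (al : {ffun 'I_d -> 'I_N.+2}) :
  (mdeg al == 1)%N = (al \in [set box_unit N j | j : 'I_d]%SET).
Proof.
apply/eqP/imsetP => [al1|[j _ ->]]; last first.
  by rewrite /mdeg mindex_box_unit (bigD1 j) //= /unit_mindex eqxx big1 // => i /negbTE ->.
have [k alk] : exists k, mindex al k != 0%N.
  apply/existsP; apply: contraT; rewrite negb_exists => /forallP al0.
  by move: al1; rewrite /mdeg big1 // => i _; apply/eqP/negPn/al0.
move: al1; rewrite /mdeg (bigD1 k) //=; set rest := (\sum_(i | _) _)%N => al1.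
have alk1 : mindex al k = 1%N by lia.
have /eqP : rest = 0%N by lia.
rewrite sum_nat_eq0 => /forallP rest0.
exists k => //; apply/ffunP => i; apply: val_inj; rewrite ffunE /= inordK; last by case: (i == k).
have [->|ik] := eqVneq i k; first exact: alk1.
by have /implyP/(_ ik)/eqP := rest0 i.
Qed.

Lemma monom0 y : monom (fun _ => 0%N) y = 1.
Proof. by rewrite /monom big1 // => i _; rewrite expr0. Qed.

Lemma monom_unit j y : monom (unit_mindex j) y = y 0 j.
Proof.
rewrite /monom (bigD1 j) //= /unit_mindex eqxx expr1 big1 ?mulr1 // => i /negbTE ->.
exact: expr0.
Qed.

Lemma monom_const (al : 'I_d -> nat) rho :
  monom al (rho *: const_mx 1) = rho ^+ (\sum_i al i)%N.
Proof. by rewrite /monom -prodrXr; apply: eq_bigr => i _; rewrite !mxE mulr1. Qed.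

Lemma monom_le (al : 'I_d -> nat) y q :
  (forall i, `|y 0 i| <= q) -> `|monom al y| <= q ^+ (\sum_i al i)%N.
Proof.
move=> y_le; rewrite /monom normr_prod -prodrXr; apply: ler_prod => i _.
by rewrite normr_ge0 normrX lerXn2r ?nnegrE ?(le_trans _ (y_le i)).
Qed.

Lemma box_psum_split c y N :
  box_psum c y N.+1 = c (fun _ => 0%N) + dotv (lin_coef c) y
    + \sum_(al : {ffun 'I_d -> 'I_N.+2} | (2 <= mdeg al)%N) c (mindex al) * monom (mindex al) y.
Proof.
pose F (al : {ffun 'I_d -> 'I_N.+2}) := c (mindex al) * monom (mindex al) y.
have -> : box_psum c y N.+1 = \sum_al F al by [].
rewrite (bigID (fun al => mdeg al == 0)%N) /= -addrA; congr (_ + _).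
  rewrite (eq_bigl (pred1 (box0 N))) => [|al]; last by rewrite /= mdeg_eq0.
  by rewrite big_pred1_eq /F mindex_box0 monom0 mulr1.
rewrite (bigID (fun al => mdeg al == 1)%N) /=; congr (_ + _); last first.
  by apply: eq_bigl => al; case: (mdeg al) => [|[|n]].
rewrite (eq_bigl (fun al => (mdeg al == 1)%N)) => [|al]; last by case: eqP => // ->.
rewrite (eq_bigl (mem [set box_unit N j | j : 'I_d]%SET)) => [|al]; last by rewrite /= mdeg_eq1.
rewrite big_imset /=; last by move=> i j _ _ /box_unit_inj.
by apply: eq_bigr => j _; rewrite /F mindex_box_unit monom_unit mxE.
Qed.

Lemma box_psum_rem_le c y rho s N : 0 < rho -> 0 <= s <= 1 ->
  (forall i, `|y 0 i| <= s * rho) ->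
  `|\sum_(al : {ffun 'I_d -> 'I_N.+1} | (2 <= mdeg al)%N) c (mindex al) * monom (mindex al) y|
    <= s ^+ 2 * box_abssum c (rho *: const_mx 1) N.
Proof.
move=> rho_gt0 /andP[s_ge0 s_le1] y_le.
apply: le_trans (ler_norm_sum _ _ _) _.
rewrite /box_abssum mulr_sumr [X in _ <= X](bigID (fun al => 2 <= mdeg al)%N) /=.
apply: ler_wpDr; first by apply: sumr_ge0 => al _; rewrite mulr_ge0 ?sqr_ge0.
apply: ler_sum => al deg_ge2.
(* a term of degree n >= 2 at [y] is at most s^n <= s^2 times the same term at [rho *: 1] *)
rewrite !normrM monom_const normrX (ger0_norm (ltW rho_gt0)).
apply: le_trans (ler_wpM2l (normr_ge0 _) (monom_le _ y_le)) _.
rewrite exprMn mulrCA; apply: ler_wpM2r; last exact: ler_wiXn2l.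
by rewrite mulr_ge0 // exprn_ge0 // ltW.
Qed.

Lemma psum_taylor1_le c y rho s M f0 : 0 < rho -> 0 <= s <= 1 ->
  (forall i, `|y 0 i| <= s * rho) ->
  (forall N, box_abssum c (rho *: const_mx 1) N <= M) ->
  box_psum c y @ \oo --> f0 ->
  `|f0 - c (fun _ => 0%N) - dotv (lin_coef c) y| <= s ^+ 2 * M.
Proof.
move=> rho_gt0 s01 y_le M_ge psum_cvg.
set P := c (fun _ => 0%N) + dotv (lin_coef c) y.
have dist_cvg : `|box_psum c y N - P| @[N --> \oo] --> `|f0 - P|.
  by apply: cvg_norm; apply: cvgB => //; exact: cvg_cst.
rewrite -addrA -opprD; apply: (cvgr_to_le dist_cvg); near=> N.
have N_gt0 : (0 < N)%N by near: N; exists 1%N.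
rewrite -(prednK N_gt0) box_psum_split -/P addrAC subrr add0r.
apply: le_trans (box_psum_rem_le _ _ rho_gt0 s01 y_le) _.
by rewrite ler_wpM2l ?sqr_ge0.
Unshelve. all: by end_near.
Qed.

End Taylor.

Section Analytic.
Variables (R : realType) (d : nat).
Notation V := 'rV[R]_d.
Implicit Types (S : set V) (f : V -> R) (a b x u g : V) (A : 'M[R]_d).

Definition internal_point S a : Prop :=
  forall u, exists2 e : R, 0 < e & forall t, `|t| < e -> S (a + t *: u).

Lemma internal_pointS S S' a : S `<=` S' -> internal_point S a -> internal_point S' a.
Proof. by move=> SS' a_int u; have [e e_gt0 Se] := a_int u; exists e => // t /Se /SS'. Qed.

Lemma internal_point_eball x r : enorm x < r -> internal_point (eball r) x.
Proof.
move=> x_lt u; have u1_gt0 : 0 < enorm u + 1 by rewrite ltr_wpDl ?enorm_ge0.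
exists ((r - enorm x) / (enorm u + 1)); first by rewrite divr_gt0 ?subr_gt0.
move=> t; rewrite ltr_pdivlMr // => t_lt; apply: le_lt_trans (enormD _ _) _.
rewrite enormZ -ltrBrDl; apply: le_lt_trans t_lt.
by rewrite ler_wpM2l // lerDl.
Qed.

Lemma internal_point_affine S A b x : A \in unitmx ->
  internal_point [set y | S (affine A b y)] x -> internal_point S (affine A b x).
Proof.
move=> A_unit x_int u; have [e e_gt0 Se] := x_int (u *m invmx A).
exists e => // t /Se /=; rewrite /affine mulmxDl -scalemxAl mulmxKV //.
by rewrite addrAC.
Qed.

Lemma internal_point_near S a r : 0 < r -> internal_point S a ->
  internal_point [set y | S y /\ enorm (y - a) < r] a.
Proof.
move=> r_gt0 a_int u; have [e1 e1_gt0 Se1] := a_int u.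
have [e2 e2_gt0 Se2] := internal_point_eball (x := 0) (r := r) (ltac:(by rewrite enorm0)) u.
exists (Num.min e1 e2) => [|t]; first by rewrite lt_min e1_gt0.
rewrite lt_min => /andP[t_e1 t_e2]; split; first exact: Se1.
by rewrite addrAC subrr add0r; move: (Se2 t t_e2); rewrite add0r.
Qed.

Lemma analytic_is_derive S f a : analytic_on S f -> internal_point S a ->
  exists g, forall u, is_derive a u f (dotv g u).
Proof.
move=> f_an a_int.
have Sa : S a.
  by have [e e_gt0 /(_ 0)] := a_int 0; rewrite normr0 scaler0 addr0 => /(_ e_gt0).
have [r r_gt0 [c expand]] := f_an a Sa.
have {}a_int := internal_point_near r_gt0 a_int.
have expand_at y : S (a + y) /\ enorm (a + y - a) < r ->
    (exists M, forall N, box_abssum c y N <= M) /\ box_psum c y @ \oo --> f (a + y).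
  by rewrite addrAC subrr add0r => -[Say y_lt]; exact: expand y_lt Say.
pose one : V := const_mx 1.
have [e1 e1_gt0 near_one] := a_int one.
pose rho := e1 / 2.
have rho_gt0 : 0 < rho by rewrite divr_gt0.
have [[M M_ge] _] := expand_at _ (near_one rho (ltac:(rewrite gtr0_norm /rho //; lra))).
have f_a : f a = c (fun _ => 0%N).
  have [_ psum0] := expand_at 0 (ltac:(rewrite !addr0 subrr enorm0; exact: (conj Sa r_gt0))).
  have s01 : 0 <= (0 : R) <= 1 by rewrite lexx ler01.
  have y0_le i : `|(0 : V) 0 i| <= 0 * rho by rewrite mxE normr0 mul0r.
  have := psum_taylor1_le rho_gt0 s01 y0_le M_ge psum0.
  by rewrite addr0 dotv0r subr0 expr0n mul0r normr_le0 subr_eq0 => /eqP.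
exists (lin_coef c) => u.
have [eu eu_gt0 near_u] := a_int u.
have u1_gt0 : 0 < enorm u + 1 by rewrite ltr_wpDl ?enorm_ge0.
apply: (@is_derive_quadratic _ _ _ _ _ _ (Num.min eu (rho / (enorm u + 1)))
                              (M * (enorm u / rho) ^+ 2)).
  by rewrite lt_min eu_gt0 divr_gt0.
move=> t; rewrite lt_min => /andP[t_gt0 /andP[t_eu]].
rewrite ltr_pdivlMr // => t_rho.
have [_ psum_t] := expand_at _ (near_u t t_eu).
have s01 : 0 <= `|t| * enorm u / rho <= 1.
  apply/andP; split; first by rewrite divr_ge0 ?mulr_ge0 ?enorm_ge0 ?ltW.
  by rewrite ler_pdivrMr // mul1r; apply: ltW; apply: le_lt_trans t_rho; rewrite ler_wpM2l // lerDl.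
have tu_le i : `|(t *: u) 0 i| <= `|t| * enorm u / rho * rho.
  by rewrite divfK ?gt_eqF // -enormZ coord_le_enorm.
have := psum_taylor1_le rho_gt0 s01 tu_le M_ge psum_t.
have -> : M * (enorm u / rho) ^+ 2 * t ^+ 2 = (`|t| * enorm u / rho) ^+ 2 * M.
  by rewrite -[t ^+ 2]real_normK ?num_real //; ring.
by rewrite f_a [a + _]addrC dotvZr.
Qed.

Lemma is_derive_dotv g x u : is_derive x u (dotv g) (dotv g u).
Proof.
apply: (@is_derive_quadratic _ _ _ _ _ _ 1 0) => // t _.
by rewrite dotvDr dotvZr addrK subrr normr0 mul0r.
Qed.

Lemma is_derive_comp_affine f A b x u (df : R) :
  is_derive (affine A b x) (u *m A) f df -> is_derive x u (f \o affine A b) df.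
Proof.
have quotE : (fun t => t^-1 *: ((f \o affine A b \o shift x) (t *: u) - f (affine A b x)))
    = (fun t => t^-1 *: ((f \o shift (affine A b x)) (t *: (u *m A)) - f (affine A b x))).
  by apply/funext => t /=; rewrite /affine mulmxDl scalemxAl addrA.
by case=> f_der f_val; split; rewrite /derivable /derive /= quotE.
Qed.

Lemma grad_is_derive f x g : (forall u, is_derive x u f (dotv g u)) -> grad f x = g.
Proof.
by move=> f_der; apply/rowP => i; case: (f_der (delta_mx 0 i)) => _; rewrite mxE dotv_delta.
Qed.

Lemma Phih_is_derive (psi : V -> R) v om h A b x g :
  (forall w, is_derive (affine A b x + om) w psi (dotv g w)) ->
  forall u, is_derive x u (Phih psi v om h A b) (dotv (h^-1 *: ((g + v) *m A^T)) u).
Proof.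
move=> psi_der u.
have -> : Phih psi v om h A b
    = h^-1 \*: ((psi \o affine A (b + om)) + (dotv v \o affine A b) - cst (psi om)).
  by apply/funext => y; rewrite /Phih /Phi /affine -[_ + b + om]addrA.
have -> : dotv (h^-1 *: ((g + v) *m A^T)) u
    = h^-1 *: (dotv g (u *m A) + dotv v (u *m A) - 0).
  by rewrite subr0 !dotv_mulmxr dotvZl mulmxDl dotvDl.
apply: is_deriveZ; apply: is_deriveB; apply: is_deriveD; apply: is_derive_comp_affine.
  by rewrite /affine addrA; exact: psi_der.
exact: is_derive_dotv.
Qed.

End Analytic.

Lemma affine_convex_comb (R : realType) (d : nat) (A : 'M[R]_d) (b x y : 'rV[R]_d) t :
  affine A b (t *: x + (1 - t) *: y) = t *: affine A b x + (1 - t) *: affine A b y.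
Proof. by rewrite /affine mulmxDl -!scalemxAl; apply/rowP => i; rewrite !mxE; ring. Qed.

Section Sublevel.
Variables (R : realType) (d : nat).
Notation V := 'rV[R]_d.
Variables (psi : V -> R) (v om b x0 : V) (A : 'M[R]_d) (h : R) (S : set V).
Let f := Phih psi v om h A b.
Hypotheses (h_gt0 : 0 < h) (f_cvx : convex_on S f) (S_x0 : S x0) (Tx0 : affine A b x0 = 0).

Lemma Phih_zero : f x0 = 0.
Proof. by rewrite /f /Phih /Phi Tx0 add0r dotv0r addr0 subrr mulr0. Qed.

Lemma Phi_affine y : Phi psi v om (affine A b y) = h * f y.
Proof. by rewrite /f /Phih mulrA mulfV ?gt_eqF // mul1r. Qed.

Lemma Phi_segment_le x t : S x -> 0 <= t <= 1 ->
  Phi psi v om (t *: affine A b x) <= h * (t * f x).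
Proof.
move=> Sx t01; have := f_cvx Sx S_x0 t01.
rewrite Phih_zero mulr0 addr0 -(ler_pM2l h_gt0) -Phi_affine.
by rewrite affine_convex_comb Tx0 scaler0 addr0.
Qed.

Variables (c : R) (k : nat) (r : R).
Hypothesis growth : forall y, enorm y < 2^-1 -> (c * enorm y) ^+ k <= Phi psi v om y.
Hypothesis h_lt : h < (c / 4) ^+ k.
Hypothesis sublevel_bounded : forall y, sublev psi v om h (affine A b y) -> enorm y < r.

Lemma enorm_preimage0_lt : enorm x0 < r.
Proof.
apply: sublevel_bounded; rewrite Tx0; split; first by rewrite /eball /= enorm0.
by rewrite /Phi add0r dotv0r addr0 subrr divr_gt0.
Qed.

Lemma affine_lt_of_le2 x : S x -> f x <= 2 -> enorm (affine A b x) < 5 / 2.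
Proof.
move=> Sx fx_le; rewrite ltNge; apply/negP => Tx_ge.
pose t := (4 * enorm (affine A b x))^-1.
have t_gt0 : 0 < t by rewrite invr_gt0; lra.
have t_le : t <= 10^-1 by rewrite lef_pV2 ?posrE; lra.
have tT : enorm (t *: affine A b x) = 4^-1.
  by rewrite enormZ gtr0_norm // /t; field; rewrite gt_eqF //; lra.
clearbody t.
have t01 : 0 <= t <= 1 by rewrite ltW //=; lra.
have tfx_le : t * f x <= 5^-1.
  by apply: le_trans (ler_wpM2l (ltW t_gt0) fx_le) _; lra.
have := @growth (t *: affine A b x); rewrite tT => /(_ (ltac:(lra))) growth_t.
have h_tfx_le : h * (t * f x) <= h / 5 := ler_wpM2l (ltW h_gt0) tfx_le.
have h_lt_h5 : h < h / 5.
  exact: lt_le_trans h_lt (le_trans growth_t (le_trans (Phi_segment_le Sx t01) h_tfx_le)).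
by move: h_gt0 h_lt_h5; lra.
Qed.

Lemma dist_lt_of_affine_lt x : S x -> f x <= 2 -> enorm (affine A b x) < 5 / 2 ->
  enorm (x - x0) < 10 * r.
Proof.
move=> Sx fx_le Tx_lt; have x0_lt := enorm_preimage0_lt.
pose y := 5^-1 *: x + (1 - 5^-1) *: x0.
have y_lt : enorm y < r.
  have t01 : 0 <= (5^-1 : R) <= 1 by apply/andP; split; lra.
  apply: sublevel_bounded; rewrite /sublev /y affine_convex_comb Tx0 scaler0 addr0.
  split; first by rewrite /eball /= enormZ gtr0_norm // -ltr_pdivlMl //; move: Tx_lt; lra.
  apply: le_lt_trans (Phi_segment_le Sx t01) _.
  by rewrite ltr_pM2l // -ltr_pdivlMl //; move: fx_le; lra.
have -> : x - x0 = 5 *: (y - x0) by apply/rowP => i; rewrite !mxE; field.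
rewrite enormZ gtr0_norm //; have := enormD y (- x0); rewrite enormN.
by move: x0_lt y_lt; lra.
Qed.

Lemma dist_lt_of_le2 x : S x -> f x <= 2 -> enorm (x - x0) < 10 * r.
Proof. by move=> Sx fx_le; apply: dist_lt_of_affine_lt => //; exact: affine_lt_of_le2. Qed.

End Sublevel.

Unset Implicit Arguments.

Theorem lemma4p5 (R : realType) (d : nat) (psi : 'rV[R]_d -> R)
    (k : nat) (m c_phi h0 R0 : R)
    (v om : 'rV[R]_d) (h : R) (A : 'M[R]_d) (b : 'rV[R]_d) :
  (2 <= d <= 4)%N ->
  (* phi = psi on [-1,1]^d, psi analytic convex on [-2,2]^d, finite type on [-1,1]^d *)
  analytic_on (cube 2) psi ->
  convex_on (cube 2) psi ->
  finite_type_km (cube 1) psi k m ->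
  (* the constant c_phi *)
  0 < c_phi ->
  (forall (v' om' : 'rV[R]_d), eball (4^-1) om' -> grad psi om' = - v' ->
     forall x, eball (2^-1) x -> (c_phi * enorm x) ^+ k <= Phi psi v' om' x) ->
  (* h_o *)
  0 < h0 -> h0 <= (c_phi / 4) ^+ k ->
  (* v, omega_v *)
  eball (4^-1) om -> grad psi om = - v ->
  (* h and T_v^h *)
  0 < h -> h < h0 ->
  A \in unitmx ->
  (forall x, eball 1 x -> sublev psi v om h (affine A b x)) ->
  (forall x, sublev psi v om h (affine A b x) -> eball d%:R x) ->
  (* standing assumption on Phi_v^h and B_{R_o} *)
  100 * d%:R <= R0 ->
  (forall x, eball R0 x -> cube 2 (affine A b x + om)) ->
  convex_on (eball R0) (Phih psi v om h A b) ->
  finite_type_on (eball R0) (Phih psi v om h A b) ->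
  (* conclusion on D_{v,o}^h *)
  forall x, eball R0 x ->
    2^-1 <= Phih psi v om h A b x <= 2 ->
    (20 * d%:R)^-1 <= enorm (grad (Phih psi v om h A b) x).
Proof.
move=> /andP[d_ge2 _] psi_an _ _ _ growth _ h0_le om_ball grad_om h_gt0 h_lt A_unit _
  sub_ball R0_ge cube_R0 f_cvx _ x x_R0 /andP[fx_ge fx_le].
set f := Phih psi v om h A b in f_cvx fx_ge fx_le *.
have d_gt0 : 0 < d%:R :> R by rewrite ltr0n (leq_trans _ d_ge2).
have p_int : internal_point (cube 2) (affine A b x + om).
  rewrite /affine -addrA; apply: internal_point_affine A_unit _.
  by apply: internal_pointS (internal_point_eball x_R0) => y /cube_R0; rewrite /affine -addrA.
have [g psi_der] := analytic_is_derive psi_an p_int.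
have f_der := Phih_is_derive v h psi_der.
rewrite (grad_is_derive f_der).
pose x0 := - b *m invmx A.
have Tx0 : affine A b x0 = 0 by rewrite /affine mulmxKV // addNr.
have x0_R0 : eball R0 x0.
  by apply: lt_le_trans (enorm_preimage0_lt h_gt0 Tx0 sub_ball) _; lra.
have dist := dist_lt_of_le2 h_gt0 f_cvx x0_R0 Tx0 (growth v om om_ball grad_om)
  (lt_le_trans h_lt h0_le) sub_ball x_R0 fx_le.
have := convex_sub_le f_cvx x_R0 x0_R0 (f_der (x0 - x)).
have -> : f x0 = 0 by exact: Phih_zero.
rewrite subr0 => fx_le_G.
have d10_gt0 : 0 < 10 * d%:R :> R by rewrite mulr_gt0.
rewrite -(ler_pM2r d10_gt0).
have -> : (20 * d%:R)^-1 * (10 * d%:R) = 2^-1 :> R by field; rewrite gt_eqF.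
apply: le_trans (le_trans fx_ge fx_le_G) _.
by rewrite ler_wpM2l ?enorm_ge0 ?ltW.
Qed.
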